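(* Let $(F,\phi)$ be an extended representation graph for $E$, let $w$ be a source in $F$, and let $p,q$ be paths in $F$ (of length $\ge0$) with source $w$. Then $r(p)=r(q)$ if and only if $p=q$.
   Context: $E$ is a row-finite directed graph with, for each vertex $v$ emitting an edge, a chosen special edge $e^v\in s^{-1}(v)$; other edges are nonspecial. The double graph $E_d$ has vertices $E^0$ and edges $e$ (real) and $e^*$ (ghost) for $e\in E^1$, with $s_d(e)=s(e),r_d(e)=r(e),s_d(e^* )=r(e),r_d(e^* )=s(e)$. Paths of length $0$ are vertices $w$ with $s(w)=r(w)=w$. An extended representation graph for $E$ is a pair $(F,\phi)$, $F$ a directed graph, $\phi:F\to E_d$ a graph homomorphism, such that for every $w\in F^0$: (i) $w$ is a source (receives no edge) or receives exactly one edge $f_w$; (ii) if $w$ is a source or $\phi(f_w)$ is a nonspecial real edge, $\phi$ maps $s^{-1}(w)$ bijectively onto $s_d^{-1}(\phi(w))$; (iii) if $\phi(f_w)$ is a special real edge, onto $s_d^{-1}(\phi(w))\setminus\{\phi(f_w)^*\}$; (iv) if $\phi(f_w)$ is a ghost edge, onto the ghost edges in $s_d^{-1}(\phi(w))$. *)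

From Stdlib Require Import List.
Import ListNotations.
Set Implicit Arguments.

Record graph := Graph {
  vert : Type;
  edge : Type;
  src : edge -> vert;
  rng : edge -> vert
}.
Arguments src {g} e.
Arguments rng {g} e.

Definition row_finite (E : graph) : Prop :=
  forall v : vert E, exists l : list (edge E), forall e, src e = v <-> In e l.

(* Choice of special edges: [sp v = Some e] means e = e^v; every vertex
   emitting an edge has a chosen special edge in s^{-1}(v). *)
Definition special_choice (E : graph) (sp : vert E -> option (edge E)) : Prop :=
  (forall v e, sp v = Some e -> src e = v) /\
  (forall v, (exists e, src e = v) -> exists e, sp v = Some e).
Arguments special_choice {E} sp.

Definition special (E : graph) (sp : vert E -> option (edge E)) (e : edge E) : Prop :=
  sp (src e) = Some e.
Arguments special {E} sp e.

(* The double graph E_d: edges inl e (real e) and inr e (the ghost edge e^* ). *)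
Definition dsrc (E : graph) (x : edge E + edge E) : vert E :=
  match x with inl e => src e | inr e => rng e end.
Definition drng (E : graph) (x : edge E + edge E) : vert E :=
  match x with inl e => rng e | inr e => src e end.
Arguments dsrc {E} x.
Arguments drng {E} x.
Definition double (E : graph) : graph :=
  Graph (@dsrc E) (@drng E).

Definition is_ghost (A B : Type) (x : A + B) : Prop :=
  match x with inl _ => False | inr _ => True end.

Definition graph_hom (F : graph) (E : graph)
  (phi0 : vert F -> vert E) (phi1 : edge F -> edge E + edge E) : Prop :=
  forall f, dsrc (phi1 f) = phi0 (src f) /\ drng (phi1 f) = phi0 (rng f).
Arguments graph_hom {F E} phi0 phi1.

Definition bij_onto (F : graph) (X : Type) (phi1 : edge F -> X)
  (w : vert F) (P : X -> Prop) : Prop :=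
  (forall f, src f = w -> P (phi1 f)) /\
  (forall x, P x -> exists f, src f = w /\ phi1 f = x) /\
  (forall f g, src f = w -> src g = w -> phi1 f = phi1 g -> f = g).
Arguments bij_onto {F X} phi1 w P.

Definition ext_rep_graph (E : graph) (sp : vert E -> option (edge E))
  (F : graph) (phi0 : vert F -> vert E) (phi1 : edge F -> edge E + edge E) : Prop :=
  graph_hom phi0 phi1 /\
  forall w : vert F,
    (forall f g, rng f = w -> rng g = w -> f = g) /\
    ((forall f, rng f <> w) ->
       bij_onto phi1 w (fun x => dsrc x = phi0 w)) /\
    (forall fw, rng fw = w ->
       match phi1 fw with
       | inl e =>
           (~ special sp e -> bij_onto phi1 w (fun x => dsrc x = phi0 w)) /\
           (special sp e ->
              bij_onto phi1 w (fun x => dsrc x = phi0 w /\ x <> inr e))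
       | inr e =>
           bij_onto phi1 w (fun x => dsrc x = phi0 w /\ is_ghost x)
       end).
Arguments ext_rep_graph {E} sp {F} phi0 phi1.

(* Finite paths in a graph: a pair (start vertex, list of edges e1 ... en)
   with s(e1) = start and r(e_i) = s(e_{i+1}); n = 0 gives the vertex path. *)
Definition path (F : graph) : Type := (vert F * list (edge F))%type.

Fixpoint chain (F : graph) (v : vert F) (l : list (edge F)) : Prop :=
  match l with
  | [] => True
  | e :: l' => src e = v /\ chain F (rng e) l'
  end.
Arguments chain {F} v l.

Definition is_path (F : graph) (p : path F) : Prop := chain (fst p) (snd p).
Arguments is_path {F} p.

Definition path_src (F : graph) (p : path F) : vert F := fst p.
Arguments path_src {F} p.

Fixpoint last_vertex (F : graph) (v : vert F) (l : list (edge F)) : vert F :=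
  match l with
  | [] => v
  | e :: l' => last_vertex F (rng e) l'
  end.
Arguments last_vertex {F} v l.

Definition path_rng (F : graph) (p : path F) : vert F := last_vertex (fst p) (snd p).
Arguments path_rng {F} p.

Definition is_source (F : graph) (w : vert F) : Prop := forall f : edge F, rng f <> w.
Arguments is_source {F} w.

(* In an extended representation graph every vertex receives at most one
   edge, so a path ending at a given vertex can be reconstructed backwards
   edge by edge; starting from a source, this reconstruction can only stop
   at the start, so the path is determined by its range. *)
From Stdlib Require Import List.
Import ListNotations.

Lemma last_vertex_snoc (F : graph) (v : vert F) (l : list (edge F)) (e : edge F) :
  last_vertex v (l ++ [e]) = rng e.
Proof.
  revert v; induction l as [|e' l IH]; intros v; simpl; auto.
Qed.

Lemma chain_snoc (F : graph) (v : vert F) (l : list (edge F)) (e : edge F) :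
  chain v (l ++ [e]) <-> chain v l /\ src e = last_vertex v l.
Proof.
  revert v; induction l as [|e' l IH]; intros v; simpl.
  - tauto.
  - rewrite IH; tauto.
Qed.

Lemma ext_rep_graph_rng_inj {E : graph} {sp : vert E -> option (edge E)}
  {F : graph} {phi0 : vert F -> vert E} {phi1 : edge F -> edge E + edge E} :
  ext_rep_graph sp phi0 phi1 -> forall f g : edge F, rng f = rng g -> f = g.
Proof.
  intros [_ HF] f g Hfg.
  destruct (HF (rng g)) as [in_deg_le1 _].
  exact (in_deg_le1 f g Hfg eq_refl).
Qed.

Section SourcePaths.

Context {F : graph}.
Hypothesis rng_inj : forall f g : edge F, rng f = rng g -> f = g.
Context {w : vert F}.
Hypothesis w_source : is_source w.

Lemma chain_from_source_rng_inj (l1 l2 : list (edge F)) :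
  chain w l1 -> chain w l2 -> last_vertex w l1 = last_vertex w l2 -> l1 = l2.
Proof.
  revert l2; induction l1 as [|e1 l1 IH] using rev_ind;
    intros l2 C1 C2 Hlast; destruct l2 as [|e2 l2 _] using rev_ind.
  - reflexivity.
  - rewrite last_vertex_snoc in Hlast; simpl in Hlast.
    destruct (w_source e2); auto.
  - rewrite last_vertex_snoc in Hlast; simpl in Hlast.
    destruct (w_source e1); auto.
  - rewrite !last_vertex_snoc in Hlast.
    apply rng_inj in Hlast as <-.
    apply chain_snoc in C1 as [C1 src1], C2 as [C2 src2].
    rewrite (IH l2); auto.
    rewrite <- src1, <- src2; reflexivity.
Qed.

End SourcePaths.

Theorem lemma5p5 (E : graph) (sp : vert E -> option (edge E))
  (HE : row_finite E) (Hsp : special_choice sp)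
  (F : graph) (phi0 : vert F -> vert E) (phi1 : edge F -> edge E + edge E)
  (HF : ext_rep_graph sp phi0 phi1)
  (w : vert F) (Hw : is_source w)
  (p q : path F) (Hp : is_path p) (Hq : is_path q)
  (Hps : path_src p = w) (Hqs : path_src q = w) :
  path_rng p = path_rng q <-> p = q.
Proof.
  split; [| intros ->; reflexivity].
  destruct p as [v1 l1], q as [v2 l2].
  unfold is_path, path_src, path_rng in *; simpl in *; subst v1 v2.
  intros Hrng; f_equal.
  apply (chain_from_source_rng_inj (ext_rep_graph_rng_inj HF) Hw); assumption.
Qed.
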